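(* Let $T=(t_{kl})$ be an $\mathbb{N}$-tableau of shape $\lambda$ and let $\widehat{T}$ be its image under the toggle map defined in the context. Then for every border box $(a,b)$ of $\lambda$, \[\mathrm{diag}_{\widehat{T}}(a,b)=\mathrm{rect}_T(a,b).\]
   Context: Partitions are drawn in English notation with matrix coordinates: the box in row $i$ and column $j$ is $(i,j)$, and $(1,1)$ is the upper-left box. An $\mathbb{N}$-tableau of shape $\lambda$ is an assignment of a nonnegative integer to each box of $\lambda$. A border box of $\lambda$ is a box $(i,j)$ such that $(i+1,j+1)$ is not a box; a corner box is a box $(i,j)$ such that neither $(i+1,j)$ nor $(i,j+1)$ is a box. For an $\mathbb{N}$-tableau $B=(b_{kl})$ and a box $(i,j)$, the diagonal sum is $\mathrm{diag}_B(i,j)=\sum_{k=0}^{\min(i,j)-1}b_{i-k,j-k}$ and the rectangle sum is $\mathrm{rect}_B(i,j)=\sum_{k=1}^{i}\sum_{l=1}^{j}b_{kl}$ (boxes outside the shape contributing $0$). The toggle map $T\mapsto\widehat{T}$ is defined recursively: $\widehat{\emptyset}=\emptyset$; if $T'$ is obtained from $T$ by adding a corner box $(i,j)$ (of $\mathrm{sh}(T')$) with entry $x$, then $\widehat{T'}$ is obtained from $\widehat{T}$ as follows. For $k\ge1$ let $\beta_k,\gamma_k,\alpha_k$ be the entries of $\widehat{T}$ at $(i-k,j-k)$, $(i-k+1,j-k)$, $(i-k,j-k+1)$ respectively (taken to be $0$ if the box is not in $\mathrm{sh}(T)$). Then $\widehat{T'}$ agrees with $\widehat{T}$ except that for $1\le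 k<\min(i,j)$ the entry at $(i-k,j-k)$ becomes $\max(\alpha_{k+1},\gamma_{k+1})+\min(\alpha_k,\gamma_k)-\beta_k$, and the entry at $(i,j)$ is $\max(\alpha_1,\gamma_1)+x$. This is independent of the order in which boxes are added. *)

From mathcomp Require Import all_boot all_order all_algebra.
Set Implicit Arguments. Unset Strict Implicit. Unset Printing Implicit Defensive.
Import Order.TTheory GRing.Theory Num.Theory.

Definition is_partition (lam : seq nat) : bool :=
  sorted geq lam && all (fun r => 0 < r) lam.

(* Box (i,j), 1-indexed matrix coordinates, lies in the shape lam. *)
Definition in_shape (lam : seq nat) (i j : nat) : bool :=
  (0 < i) && (0 < j) && (j <= nth 0 lam i.-1).

Definition border_box (lam : seq nat) (i j : nat) : bool :=
  in_shape lam i j && ~~ in_shape lam i.+1 j.+1.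

(* An N-tableau of shape lam is a function nat -> nat -> nat; only its values
   on the boxes of lam are relevant (values elsewhere are ignored). *)
Definition ntableau := nat -> nat -> nat.

(* The boxes of lam, row by row, left to right. Adding them in this order,
   each newly added box is a corner box of the current shape. *)
Definition boxes (lam : seq nat) : seq (nat * nat) :=
  flatten [seq [seq (i.+1, j.+1) | j <- iota 0 (nth 0 lam i)] | i <- iota 0 (size lam)].

Local Open Scope ring_scope.

(* Hat-tableaux are int-valued functions (0 outside the current shape). *)
Definition toggle_step (F : nat -> nat -> int) (i j x : nat) : nat -> nat -> int :=
  fun p q =>
    if (p == i) && (q == j) then Num.max (F i.-1 j) (F i j.-1) + x%:Z
    else if [&& (p < i)%N, (i - p == j - q)%N & (i - p < minn i j)%N] then
      let k := (i - p)%N in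
      let alpha m := F (i - m)%N (j - m + 1)%N in
      let gamma m := F (i - m + 1)%N (j - m)%N in
      let beta m := F (i - m)%N (j - m)%N in
      Num.max (alpha k.+1) (gamma k.+1) + Num.min (alpha k) (gamma k) - beta k
    else F p q.

Definition toggle (lam : seq nat) (T : ntableau) : nat -> nat -> int :=
  foldl (fun F b => toggle_step F b.1 b.2 (T b.1 b.2)) (fun _ _ => 0) (boxes lam).

Definition diag_sum (B : nat -> nat -> int) (i j : nat) : int :=
  \sum_(0 <= k < minn i j) B (i - k)%N (j - k)%N.

Definition rect_sum (lam : seq nat) (T : ntableau) (i j : nat) : nat :=
  (\sum_(1 <= k < i.+1) \sum_(1 <= l < j.+1) (if in_shape lam k l then T k l else 0))%N.

From mathcomp Require Import all_boot all_order all_algebra zify ring.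
Import Order.TTheory GRing.Theory Num.Theory.

Set Implicit Arguments.
Unset Strict Implicit.
Unset Printing Implicit Defensive.

(* Induction over the boxes of lam, added row by row, each being an outer corner
   of the shape S built so far.  Invariant: the current hat tableau F vanishes
   outside S, is nonnegative and weakly increasing along the rows and columns of
   S, and diag_F = rect_T at every border box of S.  Adding the corner (i,j)
   only changes the diagonal through (i,j), whose new entries telescope thanks to
   max(a,g) + min(a,g) = a + g: the new diagonal sum at (i,j) becomes
   x + diag(i-1,j) + diag(i,j-1) - diag(i-1,j-1), the inclusion-exclusion formula
   for rect(i,j).  Each new entry lies between its upper/left and its lower/right
   neighbours, so monotonicity survives; nonnegativity evaluates the maximum left
   over at the far end of the diagonal, where one of its arguments is 0. *)

Definition transpose {A : Type} (F : nat -> nat -> A) : nat -> nat -> A :=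
  fun p q => F q p.

(* [i + q == j + p] says [i - p = j - q] without truncated subtraction. *)
Definition diag_box (i j p q : nat) : bool :=
  [&& 0 < p, 0 < q, p <= i & i + q == j + p].

Lemma diag_box_tr i j p q : diag_box j i q p = diag_box i j p q.
Proof. by apply/and4P/and4P => -[? ? ? /eqP ?]; split=> //; apply/eqP; lia. Qed.

Section ToggleStepValues.
Local Open Scope ring_scope.
Variables (F : nat -> nat -> int) (i j x : nat).

Lemma toggle_step_corner :
  toggle_step F i j x i j = Num.max (F i.-1 j) (F i j.-1) + x%:Z.
Proof. by rewrite /toggle_step !eqxx. Qed.

Lemma toggle_step_diag p q : diag_box i j p q -> (p < i)%N ->
  toggle_step F i j x p q =
  Num.max (F p.-1 q) (F p q.-1) + Num.min (F p q.+1) (F p.+1 q) - F p q.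
Proof.
move=> /and4P [p_gt0 q_gt0 _ /eqP dpq] lt_pi.
rewrite /toggle_step ifF; last by apply/negbTE/nandP; left; apply/eqP; lia.
rewrite ifT; last by apply/and3P; split; [| apply/eqP |]; lia.
have -> : (i - (i - p).+1 = p.-1)%N by lia.
have -> : (i - (i - p) = p)%N by lia.
have -> : (j - (i - p) = q)%N by lia.
have -> : (j - (i - p).+1 = q.-1)%N by lia.
by rewrite !addn1 !prednK.
Qed.

Lemma toggle_step_off p q : (0 < i)%N -> (0 < j)%N -> ~~ diag_box i j p q ->
  toggle_step F i j x p q = F p q.
Proof.
move=> i_gt0 j_gt0 off; rewrite /toggle_step.
case: ifP => [/andP [/eqP pi /eqP qj] | _]; last case: ifP => // /and3P [lt_pi /eqP dpq lt_min].
- by rewrite /diag_box pi qj i_gt0 j_gt0 leqnn addnC eqxx in off.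
- by case/negP: off; apply/and4P; split; [lia | lia | lia | apply/eqP; lia].
Qed.

End ToggleStepValues.

Lemma toggle_step_tr F i j x p q : (0 < i)%N -> (0 < j)%N ->
  toggle_step (transpose F) j i x q p = toggle_step F i j x p q.
Proof.
move=> i_gt0 j_gt0; have [pi | pi] := boolP ((p == i) && (q == j)).
  by case/andP: pi => /eqP -> /eqP ->; rewrite !toggle_step_corner maxC.
have [dpq | off] := boolP (diag_box i j p q); last first.
  by rewrite !toggle_step_off // diag_box_tr.
have [lt_pi lt_qj] : (p < i)%N /\ (q < j)%N.
  case/and4P: dpq pi => _ _ le_pi /eqP dpq.
  by rewrite negb_and => /orP [] /eqP ne; lia.
have dqp : diag_box j i q p by rewrite diag_box_tr.
by rewrite !toggle_step_diag // /transpose maxC minC.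
Qed.

Definition add_box (S : nat -> nat -> bool) (i j : nat) : nat -> nat -> bool :=
  fun p q => S p q || ((p == i) && (q == j)).

Record box_ideal (S : nat -> nat -> bool) : Prop := {
  ideal_pos : forall p q, S p q -> (0 < p) && (0 < q);
  ideal_down : forall p q p' q', S p q -> 0 < p' <= p -> 0 < q' <= q -> S p' q' }.

Definition outer_corner (S : nat -> nat -> bool) (i j : nat) : bool :=
  [&& 0 < i, 0 < j, ~~ S i j, (i == 1) || S i.-1 j & (j == 1) || S i j.-1].

Record monotone_on (S : nat -> nat -> bool) (F : nat -> nat -> int) : Prop := {
  mono_out : forall p q, ~~ S p q -> F p q = 0%R;
  mono_ge0 : forall p q, (0 <= F p q)%R;
  mono_up : forall p q, S p q -> (F p.-1 q <= F p q)%R;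
  mono_left : forall p q, S p q -> (F p q.-1 <= F p q)%R }.

Lemma box_ideal_tr S : box_ideal S -> box_ideal (transpose S).
Proof.
case=> pos down; split=> [p q /pos | p q p' q' Sqp le_p le_q]; first by rewrite andbC.
exact: down Sqp le_q le_p.
Qed.

Lemma outer_corner_tr S i j : outer_corner (transpose S) j i = outer_corner S i j.
Proof.
rewrite /outer_corner /transpose.
by case: (0 < i); case: (0 < j); rewrite //= [_ && ((i == 1) || _)]andbC.
Qed.

Lemma monotone_on_tr S F : monotone_on S F -> monotone_on (transpose S) (transpose F).
Proof.
by case=> out ge0 up left; split=> p q; [exact: out | exact: ge0 | exact: left | exact: up].
Qed.

Lemma box_ideal_add_box S i j :
  box_ideal S -> outer_corner S i j -> box_ideal (add_box S i j).
Proof.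
case=> pos down /and5P [i_gt0 j_gt0 _ up left].
split=> [p q /orP [/pos // | /andP [/eqP -> /eqP ->]] | p q p' q'].
  by rewrite i_gt0.
case/orP=> [Spq le_p le_q | /andP [/eqP -> /eqP ->] /andP [p'_gt0 le_p] /andP [q'_gt0 le_q]].
  by rewrite /add_box (down p q).
rewrite /add_box; have [lt_p | ge_p] := ltnP p' i.
  case/orP: up => [/eqP i1 | Sup]; first lia.
  by rewrite (down i.-1 j) //; lia.
have -> : p' = i by lia.
have [lt_q | ge_q] := ltnP q' j.
  case/orP: left => [/eqP j1 | Sleft]; first lia.
  by rewrite (down i j.-1) //; lia.
have -> : q' = j by lia.
by rewrite !eqxx orbT.
Qed.

Section ToggleStepMonotone.
Variables (S : nat -> nat -> bool) (i j : nat).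
Hypotheses (idealS : box_ideal S) (cornerS : outer_corner S i j).

Lemma mem_above_corner p q : 0 < p < i -> 0 < q <= j -> S p q.
Proof.
case/and5P: cornerS => _ _ _ /orP [/eqP i1 | Sup] _ /andP [p_gt0 lt_pi] le_q; first lia.
by apply: (ideal_down idealS Sup); rewrite ?p_gt0; lia.
Qed.

Lemma mem_left_corner p q : 0 < p <= i -> 0 < q < j -> S p q.
Proof.
case/and5P: cornerS => _ _ _ _ /orP [/eqP j1 | Sleft] le_p /andP [q_gt0 lt_qj]; first lia.
by apply: (ideal_down idealS Sleft); rewrite ?q_gt0; lia.
Qed.

Lemma nmem_below_corner p q : i <= p -> j <= q -> ~~ S p q.
Proof.
case/and5P: cornerS => i_gt0 j_gt0 nSij _ _ le_ip le_jq.
by apply: contra nSij => Spq; apply: (ideal_down idealS Spq); apply/andP.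
Qed.

Lemma diag_box_add_box p q : diag_box i j p q -> add_box S i j p q.
Proof.
case/and4P=> p_gt0 q_gt0 le_pi /eqP dpq; rewrite /add_box.
have [lt_pi | ge_pi] := ltnP p i; first by rewrite mem_above_corner //; lia.
have [-> ->] : p = i /\ q = j by lia.
by rewrite !eqxx orbT.
Qed.

Local Open Scope ring_scope.
Variables (F : nat -> nat -> int) (x : nat).
Hypothesis monoF : monotone_on S F.
Let F' := toggle_step F i j x.

Lemma toggle_step_ge_up p q : diag_box i j p q -> F p.-1 q <= F' p q.
Proof.
move=> dpq; have /and4P [p_gt0 q_gt0 le_pi /eqP eq_d] := dpq.
have [lt_pi | eq_pi] := ltnP p i; last first.
  have [-> ->] : p = i /\ q = j by lia.
  by rewrite /F' toggle_step_corner ler_wpDr // le_max lexx.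
rewrite /F' toggle_step_diag // -addrA ler_wpDr ?le_max ?lexx // subr_ge0 le_min.
apply/andP; split.
  by apply: (mono_left monoF (q := q.+1)); apply: mem_above_corner; lia.
by apply: (mono_up monoF (p := p.+1)); apply: mem_left_corner; lia.
Qed.

Lemma toggle_step_le_down p q : diag_box i j p q -> (p < i)%N -> F' p q <= F p.+1 q.
Proof.
move=> dpq lt_pi; have /and4P [p_gt0 q_gt0 _ /eqP eq_d] := dpq.
have Spq : S p q by rewrite mem_above_corner //; apply/andP; split=> //; lia.
rewrite /F' toggle_step_diag // addrAC -[leRHS]add0r lerD // ?ge_min ?lexx ?orbT //.
by rewrite subr_le0 ge_max (mono_up monoF) ?(mono_left monoF).
Qed.

Lemma toggle_step_mono_up p q : add_box S i j p q -> F' p.-1 q <= F' p q.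
Proof.
move=> Spq'.
have /and5P [i_gt0 j_gt0 nSij _ _] := cornerS.
have p_gt0 : (0 < p)%N.
  by case/orP: Spq' => [/(ideal_pos idealS) /andP [] | /andP [/eqP -> _]].
have [dpq | off] := boolP (diag_box i j p q).
  rewrite [F' p.-1 q]toggle_step_off ?toggle_step_ge_up //.
  case/and4P: dpq => _ _ _ /eqP eq_d.
  by apply/negP => /and4P [_ _ _ /eqP]; lia.
have Spq : S p q.
  case/orP: Spq' => // /andP [/eqP pi /eqP qj].
  by move: off; rewrite /diag_box pi qj i_gt0 j_gt0 leqnn addnC eqxx.
rewrite [F' p q]toggle_step_off //.
have [dpq1 | off1] := boolP (diag_box i j p.-1 q); last first.
  by rewrite /F' toggle_step_off // (mono_up monoF).
have lt_pi : (p.-1 < i)%N.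
  case/and4P: dpq1 => _ _ le_pi /eqP eq_d.
  rewrite ltn_neqAle le_pi andbT; apply/eqP => pi.
  suff : ~~ S p q by rewrite Spq.
  by apply: nmem_below_corner; lia.
by have := toggle_step_le_down dpq1 lt_pi; rewrite prednK.
Qed.

End ToggleStepMonotone.

Lemma toggle_step_monotone S F i j x :
  box_ideal S -> outer_corner S i j -> monotone_on S F ->
  monotone_on (add_box S i j) (toggle_step F i j x).
Proof.
move=> idealS cornerS monoF.
have /and5P [i_gt0 j_gt0 _ _ _] := cornerS.
split=> p q.
- move=> nSpq'.
  have nSpq : ~~ S p q by apply: contra nSpq' => Spq; rewrite /add_box Spq.
  rewrite toggle_step_off ?(mono_out monoF) //.
  by apply: contra nSpq'; apply: diag_box_add_box.
- have [dpq | off] := boolP (diag_box i j p q).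
    apply: le_trans (toggle_step_ge_up idealS cornerS x monoF dpq).
    exact: (mono_ge0 monoF).
  by rewrite toggle_step_off // (mono_ge0 monoF).
- exact: toggle_step_mono_up.
- (* left monotonicity is up monotonicity of the transposed data *)
  move=> Spq'; rewrite -[toggle_step F i j x p q.-1]toggle_step_tr //.
  rewrite -[toggle_step F i j x p q]toggle_step_tr //.
  apply: (toggle_step_mono_up (box_ideal_tr idealS) _ x (monotone_on_tr monoF)).
  + by rewrite outer_corner_tr.
  + by rewrite /add_box /transpose andbC.
Qed.

Definition border_in (S : nat -> nat -> bool) (a b : nat) : bool := S a b && ~~ S a.+1 b.+1.

Definition rect_in (S : nat -> nat -> bool) (T : ntableau) (i j : nat) : nat :=
  \sum_(1 <= k < i.+1) \sum_(1 <= l < j.+1) (if S k l then T k l else 0).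

Lemma rect_in_eq S1 S2 T a b :
    (forall k l, 0 < k <= a -> 0 < l <= b -> S1 k l = S2 k l) ->
  rect_in S1 T a b = rect_in S2 T a b.
Proof.
move=> eqS; apply: eq_big_nat => k le_k; apply: eq_big_nat => l le_l.
by rewrite eqS //; lia.
Qed.

Lemma rect_in0 S T b : rect_in S T 0 b = 0.
Proof. by rewrite /rect_in big_geq. Qed.

Lemma rect_in0r S T a : rect_in S T a 0 = 0.
Proof. by rewrite /rect_in big1 // => k _; rewrite big_geq. Qed.

Lemma rect_inD S T i j : 0 < i -> 0 < j ->
  rect_in S T i j + rect_in S T i.-1 j.-1 =
  rect_in S T i.-1 j + rect_in S T i j.-1 + (if S i j then T i j else 0).
Proof.
case: i j => [|i] [|j] // _ _.
rewrite /rect_in /= (big_nat_recr i.+1) // (big_nat_recr i.+1) //=.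
rewrite [\sum_(1 <= l < j.+2) _]big_nat_recr //=; lia.
Qed.

Lemma rect_in_add_box S T i j a b : (a < i) || (b < j) ->
  rect_in (add_box S i j) T a b = rect_in S T a b.
Proof.
move=> lt_ab; apply: rect_in_eq => k l le_k le_l; rewrite /add_box.
by case: eqP => [ki|_]; case: eqP => [lj|_]; rewrite ?andbF ?orbF //; exfalso; lia.
Qed.

Lemma diag_sum0 F b : diag_sum F 0 b = 0%R.
Proof. by rewrite /diag_sum min0n big_geq. Qed.

Lemma diag_sum0r F a : diag_sum F a 0 = 0%R.
Proof. by rewrite /diag_sum minn0 big_geq. Qed.

Section DiagSum.
Local Open Scope ring_scope.

Lemma telescope_max_min (R : numDomainType) (a g b : nat -> R) n :
  Num.max (a 0%N) (g 0%N) +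
    \sum_(0 <= k < n) (Num.max (a k.+1) (g k.+1) + Num.min (a k) (g k) - b k) =
  \sum_(0 <= k < n) (a k + g k - b k) + Num.max (a n) (g n).
Proof.
have split_max k : Num.max (a k.+1) (g k.+1) + Num.min (a k) (g k) - b k =
    (Num.max (a k.+1) (g k.+1) - Num.max (a k) (g k)) + (a k + g k - b k).
  by rewrite -(addr_min_max (a k)); ring.
under eq_bigr do rewrite split_max.
by rewrite big_split telescope_sumr //=; ring.
Qed.

Variable F : nat -> nat -> int.
Hypotheses (F0r : forall q, F 0 q = 0) (F0c : forall p, F p 0 = 0).
Hypothesis F_ge0 : forall p q, 0 <= F p q.

Lemma diag_sum_widen i j N : (minn i j <= N)%N ->
  diag_sum F i j = \sum_(0 <= k < N) F (i - k)%N (j - k)%N.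
Proof.
move=> le_N; rewrite /diag_sum (@big_cat_nat _ _ _ (minn i j) 0 N) //=.
rewrite [X in _ = _ + X]big_nat_cond [X in _ = _ + X]big1 ?addr0 //.
move=> k /andP [/andP [le_k _] _].
have [le_ij | lt_ji] := leqP i j.
  by rewrite (_ : i - k = 0)%N ?F0r //; lia.
by rewrite (_ : j - k = 0)%N ?F0c //; lia.
Qed.

Lemma diag_sum_toggle_step i j x : (0 < i)%N -> (0 < j)%N ->
  diag_sum (toggle_step F i j x) i j =
  x%:Z + diag_sum F i.-1 j + diag_sum F i j.-1 - diag_sum F i.-1 j.-1.
Proof.
move=> i_gt0 j_gt0; pose n := (minn i j).-1.
have min_ij : minn i j = n.+1 by rewrite prednK // leq_min i_gt0.
pose a k := F (i - k.+1)%N (j - k)%N.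
pose g k := F (i - k)%N (j - k.+1)%N.
pose b k := F (i - k.+1)%N (j - k.+1)%N.
have [-> -> ->] : [/\ diag_sum F i.-1 j = \sum_(0 <= k < n.+1) a k,
                     diag_sum F i j.-1 = \sum_(0 <= k < n.+1) g k &
                     diag_sum F i.-1 j.-1 = \sum_(0 <= k < n.+1) b k].
  by split; rewrite (diag_sum_widen (N := n.+1)); try lia;
     apply: eq_bigr => k _; congr (F _ _); lia.
have max_last : Num.max (a n) (g n) = a n + g n - b n.
  have [le_ij | lt_ji] := leqP i j.
    have [-> ->] : a n = 0 /\ b n = 0.
      by rewrite /a /b (_ : i - n.+1 = 0)%N ?F0r //; lia.
    by rewrite add0r subr0 max_r ?F_ge0.
  have [-> ->] : g n = 0 /\ b n = 0.
    by rewrite /g /b (_ : j - n.+1 = 0)%N ?F0c //; lia.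
  by rewrite addr0 subr0 max_l ?F_ge0.
rewrite /diag_sum min_ij big_ltn // !subn0 toggle_step_corner.
rewrite big_add1 /=.
have -> : F i.-1 j = a 0%N by rewrite /a subn0 subn1.
have -> : F i j.-1 = g 0%N by rewrite /g subn0 subn1.
rewrite (eq_big_nat _ _ (F2 := fun k =>
           Num.max (a k.+1) (g k.+1) + Num.min (a k) (g k) - b k)); last first.
  move=> k /andP [_ lt_kn]; rewrite toggle_step_diag; last 2 first.
  - by apply/and4P; split; [lia | lia | lia | apply/eqP; lia].
  - lia.
  by rewrite /a /g /b; congr (Num.max (F _ _) (F _ _) + Num.min (F _ _) (F _ _) - F _ _); lia.
rewrite addrAC telescope_max_min max_last !big_nat_recr //=.
by rewrite sumrB big_split /=; ring.
Qed.

End DiagSum.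

Lemma diag_sum_toggle_step_off F i j x a b : 0 < i -> 0 < j -> a + j != b + i ->
  diag_sum (toggle_step F i j x) a b = diag_sum F a b.
Proof.
move=> i_gt0 j_gt0 off; apply: eq_big_nat => k /andP [_ lt_k].
by rewrite toggle_step_off //; apply/negP => /and4P [_ _ _ /eqP]; lia.
Qed.

Record toggle_inv (S : nat -> nat -> bool) (T : ntableau) (F : nat -> nat -> int) : Prop := {
  inv_ideal : box_ideal S;
  inv_mono : monotone_on S F;
  inv_diag : forall a b, border_in S a b -> (diag_sum F a b = (rect_in S T a b)%:Z)%R }.

Lemma toggle_inv_diag S T F a b : toggle_inv S T F ->
  [|| a == 0, b == 0 | border_in S a b] -> (diag_sum F a b = (rect_in S T a b)%:Z)%R.
Proof.
move=> invF /or3P [/eqP -> | /eqP -> | /(inv_diag invF) //].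
  by rewrite diag_sum0 rect_in0.
by rewrite diag_sum0r rect_in0r.
Qed.

Section ToggleStepInv.
Variables (S : nat -> nat -> bool) (T : ntableau) (F : nat -> nat -> int) (i j : nat).
Hypotheses (invF : toggle_inv S T F) (cornerS : outer_corner S i j).

Let idealS := inv_ideal invF.
Let monoF := inv_mono invF.

Lemma border_add_box a b : border_in (add_box S i j) a b -> ~~ ((a == i) && (b == j)) ->
  border_in S a b && (a + j != b + i).
Proof.
rewrite /border_in /add_box negb_or => /andP [Sab' /andP [nS1 ne1]] ne.
have Sab : S a b by rewrite (negbTE ne) orbF in Sab'.
rewrite Sab nS1 /=; apply/eqP => eq_d.
have [lt_ai | le_ia] := ltnP a i.
  have [lt_a1 | le_ia1] := ltnP a.+1 i.
    by case/negP: nS1; apply: (mem_above_corner idealS cornerS); lia.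
  by case/nandP: ne1 => /eqP; lia.
suff : ~~ S a b by rewrite Sab.
by apply: (nmem_below_corner idealS cornerS); lia.
Qed.

Lemma toggle_step_diag_sum_corner :
  (diag_sum (toggle_step F i j (T i j)) i j = (rect_in (add_box S i j) T i j)%:Z)%R.
Proof.
have /and5P [i_gt0 j_gt0 nSij up left] := cornerS.
have nS_axis p q : (p == 0) || (q == 0) -> ~~ S p q.
  by move=> pq0; apply/negP => /(ideal_pos idealS); lia.
have F0r q : F 0 q = 0%R by rewrite (mono_out monoF) ?nS_axis.
have F0c p : F p 0 = 0%R by rewrite (mono_out monoF) ?nS_axis ?orbT.
have nS_below p q : i <= p -> j <= q -> S p q = false.
  by move=> le_p le_q; apply/negbTE/(nmem_below_corner idealS cornerS).
rewrite diag_sum_toggle_step //; last exact: (mono_ge0 monoF).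
have bd_up : [|| i.-1 == 0, j == 0 | border_in S i.-1 j].
  case/orP: up => [/eqP -> // | Sup].
  by rewrite /border_in Sup prednK // nS_below ?orbT.
have bd_left : [|| i == 0, j.-1 == 0 | border_in S i j.-1].
  case/orP: left => [/eqP -> | Sleft]; first by rewrite orbT.
  by rewrite /border_in Sleft prednK // nS_below ?orbT.
have bd_nw : [|| i.-1 == 0, j.-1 == 0 | border_in S i.-1 j.-1].
  case: (posnP i.-1) => [-> // | pi]; case: (posnP j.-1) => [-> | pj]; rewrite ?orbT //.
  by rewrite /border_in !prednK // (nS_below i j) //
             (mem_above_corner idealS cornerS) ?orbT //; lia.
rewrite !(toggle_inv_diag invF) //.
have corner_in : add_box S i j i j by rewrite /add_box !eqxx orbT.
have := rect_inD (add_box S i j) T i_gt0 j_gt0.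
rewrite corner_in (@rect_in_add_box S T i j i.-1 j) ?(@rect_in_add_box S T i j i j.-1)
        ?(@rect_in_add_box S T i j i.-1 j.-1); lia.
Qed.

Lemma toggle_step_diag_sum_border a b : border_in (add_box S i j) a b ->
  (diag_sum (toggle_step F i j (T i j)) a b = (rect_in (add_box S i j) T a b)%:Z)%R.
Proof.
have [/andP [/eqP -> /eqP ->] _ | ne] := boolP ((a == i) && (b == j)).
  exact: toggle_step_diag_sum_corner.
have /and5P [i_gt0 j_gt0 _ _ _] := cornerS.
move=> /border_add_box /(_ ne) /andP [bd off].
rewrite diag_sum_toggle_step_off // (inv_diag invF bd) rect_in_add_box //.
case/andP: bd => Sab _; rewrite ltnNge orbC ltnNge -negb_and.
by apply: contraL Sab => /andP [le_ia le_jb]; apply: (nmem_below_corner idealS cornerS).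
Qed.

End ToggleStepInv.

Lemma toggle_step_inv S T F i j : toggle_inv S T F -> outer_corner S i j ->
  toggle_inv (add_box S i j) T (toggle_step F i j (T i j)).
Proof.
move=> invF cornerS; split.
- exact: box_ideal_add_box (inv_ideal invF) cornerS.
- exact: toggle_step_monotone (inv_ideal invF) cornerS (inv_mono invF).
- exact: toggle_step_diag_sum_border.
Qed.

Lemma toggle_inv_ext S1 S2 T F : S1 =2 S2 -> toggle_inv S1 T F -> toggle_inv S2 T F.
Proof.
move=> eqS [[pos down] [out ge0 up left] diag]; split.
- by split=> [p q | p q p' q']; rewrite -!eqS; [exact: pos | exact: down].
- by split=> p q; rewrite -?eqS; [exact: out | exact: ge0 | exact: up | exact: left].
- move=> a b; rewrite /border_in -!eqS => /diag ->; congr Posz.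
  by apply: rect_in_eq => k l _ _; exact: eqS.
Qed.

Lemma toggle_inv_empty T : toggle_inv (fun _ _ => false) T (fun _ _ => 0%R).
Proof. by split; [split | split | move=> a b /andP []]. Qed.

Definition toggle_box (T : ntableau) (F : nat -> nat -> int) (b : nat * nat) :=
  toggle_step F b.1 b.2 (T b.1 b.2).

(* The shape reached by toggle after the first r rows of lam and the first c
   boxes of row r+1. *)
Definition shape_prefix (lam : seq nat) (r c : nat) : nat -> nat -> bool :=
  fun p q => ((p <= r) && in_shape lam p q) || [&& p == r.+1, 0 < q & q <= c].

Lemma nth_partition_le lam r : is_partition lam -> 0 < r -> nth 0 lam r <= nth 0 lam r.-1.
Proof.
case/andP=> sorted_lam _ r_gt0.
have [lt_r | le_r] := ltnP r (size lam); last by rewrite nth_default.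
have geq_trans : transitive geq by move=> y x z /= ? ?; lia.
by apply: (sorted_leq_nth geq_trans leqnn 0 sorted_lam); rewrite ?inE; lia.
Qed.

Lemma outer_corner_prefix lam r c : is_partition lam -> c < nth 0 lam r ->
  outer_corner (shape_prefix lam r c) r.+1 c.+1.
Proof.
move=> lamP lt_c; rewrite /outer_corner /shape_prefix /in_shape /= !ltnn !eqxx /=.
apply/andP; split.
  case: r lt_c => [// | r] lt_c /=; rewrite leqnn /=.
  by rewrite andbF orbF (leq_trans lt_c (nth_partition_le lamP (ltn0Sn r))).
by case: (posnP c) => [-> | c_gt0]; rewrite ?c_gt0 ?leqnn ?orbT.
Qed.

Lemma add_box_prefix lam r c :
  add_box (shape_prefix lam r c) r.+1 c.+1 =2 shape_prefix lam r c.+1.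
Proof.
move=> p q; rewrite /add_box /shape_prefix -orbA; congr (_ || _).
by case: (p == r.+1); case: ltngtP => //=; lia.
Qed.

Lemma shape_prefix_row lam r : shape_prefix lam r (nth 0 lam r) =2 shape_prefix lam r.+1 0.
Proof.
move=> p q; rewrite /shape_prefix /in_shape.
case: (eqVneq p r.+1) => [-> /= | ne]; apply/idP/idP; lia.
Qed.

Lemma shape_prefix_all lam : shape_prefix lam (size lam) 0 =2 in_shape lam.
Proof.
move=> p q; rewrite /shape_prefix /in_shape.
have [le_p | lt_p] := leqP p (size lam); first by apply/idP/idP; lia.
by rewrite nth_default; [apply/idP/idP | ]; lia.
Qed.

Lemma shape_prefix0 lam : (fun _ _ => false) =2 shape_prefix lam 0 0.
Proof. by move=> p q; rewrite /shape_prefix /in_shape; lia. Qed.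

Lemma toggle_row_inv lam T r c F : is_partition lam -> c <= nth 0 lam r ->
    toggle_inv (shape_prefix lam r c) T F ->
  toggle_inv (shape_prefix lam r (nth 0 lam r)) T
    (foldl (toggle_box T) F [seq (r.+1, j.+1) | j <- iota c (nth 0 lam r - c)]).
Proof.
move=> lamP; move Ed : (nth 0 lam r - c) => d.
elim: d c F Ed => [|d IH] c F Ed le_c invF /=.
  by have <- : c = nth 0 lam r by lia.
apply: IH; [lia | lia | ].
apply: toggle_inv_ext (add_box_prefix lam r c) _.
by apply: toggle_step_inv invF _; apply: outer_corner_prefix; lia.
Qed.

Lemma toggle_rows_inv lam T r F : is_partition lam -> r <= size lam ->
    toggle_inv (shape_prefix lam r 0) T F ->
  toggle_inv (shape_prefix lam (size lam) 0) T
    (foldl (toggle_box T) F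
       (flatten [seq [seq (i.+1, j.+1) | j <- iota 0 (nth 0 lam i)]
                   | i <- iota r (size lam - r)])).
Proof.
move=> lamP; move Ed : (size lam - r) => d.
elim: d r F Ed => [|d IH] r F Ed le_r invF /=.
  by have <- : r = size lam by lia.
rewrite foldl_cat; apply: IH; [lia | lia | ].
apply: toggle_inv_ext (shape_prefix_row lam r) _.
by have := toggle_row_inv lamP (leq0n _) invF; rewrite subn0.
Qed.

Lemma toggle_inv_shape lam T : is_partition lam -> toggle_inv (in_shape lam) T (toggle lam T).
Proof.
move=> lamP; apply: toggle_inv_ext (shape_prefix_all lam) _.
have inv0 := toggle_inv_ext (shape_prefix0 lam) (toggle_inv_empty T).
by have := toggle_rows_inv lamP (leq0n _) inv0; rewrite subn0.
Qed.

Local Open Scope ring_scope.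

Theorem proposition2p6 (lam : seq nat) (T : ntableau) (a b : nat) :
  is_partition lam -> border_box lam a b ->
  diag_sum (toggle lam T) a b = (rect_sum lam T a b)%:Z.
Proof. by move=> lamP; apply: (inv_diag (toggle_inv_shape T lamP)). Qed.
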